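(* Let $\mathcal V\in\mathcal{RS}(m,\mathbf k,d)$, $n=\sum_ik_i$, and let $\mu=(\mu_1\ge\dots\ge\mu_d>0)$. Then the following are equivalent: (1) there exists $\mathcal W\in\mathcal D(\mathcal V)$ with $\lambda(S_{\mathcal W})=\mu$; (2) there exists an orthogonal projection $P\in M_n(\mathbb C)$ of rank $d$ such that $$\lambda\big(P\,D_n(\mu)\,P\big)=\big(\lambda(S_{\mathcal V}^{-1}),0_{n-d}\big)=\lambda(G_{\mathcal V}^\dagger),$$ where $D_n(\mu)$ is the $n\times n$ diagonal matrix with diagonal $(\mu_1,\dots,\mu_d,0,\dots,0)$ and $G_{\mathcal V}^\dagger$ is the Moore–Penrose pseudo-inverse of $G_{\mathcal V}$.
   Context: Fix integers $m,d\ge1$ and $\mathbf k=(k_1,\dots,k_m)\in\mathbb N^m$, $n=\sum_ik_i$, $\mathcal K=\bigoplus_i\mathbb C^{k_i}\cong\mathbb C^n$. A system is an $m$-tuple $\mathcal V=(V_i)_{i=1}^m$ with $V_i\in L(\mathbb C^d,\mathbb C^{k_i})$. Its analysis operator is $T_{\mathcal V}:\mathbb C^d\to\mathcal K$, $T_{\mathcal V}x=(V_1x,\dots,V_mx)$, so $T_{\mathcal V}^*(y_i)_i=\sum_iV_i^*y_i$; its RS operator is $S_{\mathcal V}=T_{\mathcal V}^*T_{\mathcal V}=\sum_iV_i^*V_i$ and its Gram matrix is $G_{\mathcal V}=T_{\mathcal V}T_{\mathcal V}^*\in M_n(\mathbb C)$. $\mathcal V$ is a reconstruction system (RS) if $S_{\mathcal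 V}$ is invertible; $\mathcal{RS}(m,\mathbf k,d)$ is the set of RS's. $\mathcal W\in\mathcal{RS}(m,\mathbf k,d)$ is a dual of $\mathcal V$ if $T_{\mathcal W}^*T_{\mathcal V}=I_d$, i.e. $\sum_iW_i^*V_i=I_d$; $\mathcal D(\mathcal V)$ is the set of duals of $\mathcal V$. For a positive semidefinite matrix $S$, $\lambda(S)$ denotes its vector of eigenvalues counted with multiplicity in decreasing order, and $\lambda_j(S)$ its $j$-th entry; $0_{r}$ is the zero vector of length $r$. *)

From HB Require Import structures.
From mathcomp Require Import all_boot all_order all_algebra.
Set Implicit Arguments. Unset Strict Implicit. Unset Printing Implicit Defensive.
Import Order.TTheory GRing.Theory Num.Theory.
Local Open Scope ring_scope.

Definition ctmx (C : numClosedFieldType) p q (A : 'M[C]_(p, q)) : 'M[C]_(q, p) :=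
  (map_mx Num.conj A)^T.

Definition system (C : numClosedFieldType) (m : nat) (k : 'I_m -> nat) (d : nat) :=
  forall i : 'I_m, 'M[C]_(k i, d).

Definition anaop (C : numClosedFieldType) m k d (V : @system C m k d) : 'M[C]_(\sum_i k i, d) :=
  \mxcol_(i < m) V i.

(* RS operator S_V = T_V^* T_V = \sum_i V_i^* V_i *)
Definition rsop (C : numClosedFieldType) m k d (V : @system C m k d) : 'M[C]_d :=
  ctmx (anaop V) *m anaop V.

Definition gram (C : numClosedFieldType) m k d (V : @system C m k d) : 'M[C]_(\sum_i k i) :=
  anaop V *m ctmx (anaop V).

Definition is_RS (C : numClosedFieldType) m k d (V : @system C m k d) : Prop := rsop V \in unitmx.

Definition is_dual (C : numClosedFieldType) m k d (V W : @system C m k d) : Prop :=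
  is_RS W /\ ctmx (anaop W) *m anaop V = 1%:M.

(* l is the vector of eigenvalues of S counted with multiplicity, in
   decreasing order:  l real, sorted decreasingly, and the characteristic
   polynomial of S is \prod_(x <- l) (X - x). *)
Definition is_eigvec (C : numClosedFieldType) n (S : 'M[C]_n) (l : seq C) : Prop :=
  [/\ size l = n, all (fun x => x \is Num.real) l, sorted (>=%R) l &
      char_poly S = \prod_(x <- l) ('X - x%:P)].

Definition is_MPinv (C : numClosedFieldType) p q (A : 'M[C]_(p, q)) (X : 'M[C]_(q, p)) : Prop :=
  [/\ A *m X *m A = A, X *m A *m X = X,
      ctmx (A *m X) = A *m X & ctmx (X *m A) = X *m A].

Definition is_orth_proj_rank (C : numClosedFieldType) n (P : 'M[C]_n) (r : nat) : Prop :=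
  [/\ P *m P = P, ctmx P = P & \rank P = r].

Definition Dn (C : numClosedFieldType) n (mu : seq C) : 'M[C]_n := diag_mx (\row_(j < n) nth 0 mu j).

From HB Require Import structures.
From mathcomp Require Import all_boot all_order all_algebra all_fingroup.
Set Implicit Arguments. Unset Strict Implicit. Unset Printing Implicit Defensive.
Import Order.TTheory GRing.Theory Num.Theory Num.Def.
Local Open Scope ring_scope.

(* A system is identified with its analysis operator T, and W is a dual of V
   exactly when R := T_W satisfies R^* T = 1.  Let P_T = T S^-1 T^* be the
   orthogonal projection onto the range of T.
   (1) -> (2): R R^* is Hermitian with the spectrum of D_n(mu), so
   R R^* = Y D_n(mu) Y^* for a unitary Y, and P := Y^* P_T Y gives
   P D_n(mu) P ~ P_T R R^* P_T = T S^-2 T^*; by Sylvester's identity the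
   latter has the spectrum of S^-1 padded with zeros, and it is the
   Moore-Penrose inverse of the Gram matrix T T^*.
   (2) -> (1): P is unitarily conjugate to P_T, so K := T^* H T with
   H = Y^* D_n(mu) Y satisfies spec (S^-1 K) = spec S^-1.  Comparing the
   Hermitian matrices C^* K C and C^* C, where S^-1 = C C^*, yields G with
   G^* K G = 1 and G S^-1 G^* = S^-1; such a G extends to a unitary V of C^n
   with V T = T G, and a square root of (Y V)^* D_n(mu) (Y V) applied to T
   produces a dual whose RS operator has spectrum mu. *)

Lemma char_poly_mulmxC (R : fieldType) m n (A : 'M[R]_(m, n)) (B : 'M[R]_(n, m)) :
  'X^n * char_poly (A *m B) = 'X^m * char_poly (B *m A).
Proof.
pose x : {poly R} := 'X; pose A' := map_mx polyC A; pose B' := map_mx polyC B.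
pose M := block_mx (x%:M : 'M_m) A' B' (1%:M : 'M_n).
have detM : \det M = char_poly (A *m B).
  have eM : block_mx (1%:M : 'M_m) (- A') 0 (x%:M : 'M_n) *m M
          = block_mx (char_poly_mx (A *m B)) 0 (x *: B') (x%:M).
    rewrite mulmx_block !mul1mx !mul0mx !add0r /char_poly_mx map_mxM.
    by rewrite mulmx1 subrr mulNmx mul_scalar_mx mulmx1.
  have := congr1 determinant eM.
  rewrite det_mulmx det_ublock det1 mul1r det_lblock det_scalar mulrC.
  by apply: mulIf; rewrite expf_neq0 // polyX_eq0.
have eM : block_mx (1%:M : 'M_m) 0 (- B') (x%:M : 'M_n) *m M
        = block_mx (x%:M) A' 0 (char_poly_mx (B *m A)).
  rewrite mulmx_block !mul1mx !mul0mx ?add0r ?addr0 /char_poly_mx map_mxM.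
  by rewrite mulNmx mul_mx_scalar mul_scalar_mx addrC subrr mulmx1 addrC mulNmx.
have := congr1 determinant eM.
by rewrite det_mulmx det_lblock det1 mul1r det_ublock !det_scalar detM.
Qed.

Lemma char_poly_mulmxC_square (R : fieldType) p (A B : 'M[R]_p) :
  char_poly (A *m B) = char_poly (B *m A).
Proof. by apply: mulfI (char_poly_mulmxC A B); rewrite expf_neq0 // polyX_eq0. Qed.

Section ConjugateTranspose.
Variable C : numClosedFieldType.
Implicit Types p q r : nat.

Lemma ctmxE p q (A : 'M[C]_(p, q)) : ctmx A = map_mx conjC A^T.
Proof. by rewrite /ctmx map_trmx. Qed.

Lemma ctmxK p q (A : 'M[C]_(p, q)) : ctmx (ctmx A) = A.
Proof. by rewrite /ctmx -map_trmx trmxK -map_mx_comp map_mx_id // => x /=; rewrite conjCK. Qed.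

Lemma ctmxM p q r (A : 'M[C]_(p, q)) (B : 'M[C]_(q, r)) :
  ctmx (A *m B) = ctmx B *m ctmx A.
Proof. by rewrite /ctmx map_mxM trmx_mul. Qed.

Lemma ctmx1 p : ctmx (1%:M : 'M[C]_p) = 1%:M.
Proof. by rewrite /ctmx map_mx1 trmx1. Qed.

Lemma ctmxD p q (A B : 'M[C]_(p, q)) : ctmx (A + B) = ctmx A + ctmx B.
Proof. by rewrite /ctmx map_mxD linearD. Qed.

Lemma ctmxB p q (A B : 'M[C]_(p, q)) : ctmx (A - B) = ctmx A - ctmx B.
Proof. by rewrite /ctmx map_mxB linearB. Qed.

Lemma ctmx_inv p (A : 'M[C]_p) : ctmx (invmx A) = invmx (ctmx A).
Proof. by rewrite /ctmx map_invmx trmx_inv. Qed.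

Lemma ctmx_unit p (A : 'M[C]_p) : (ctmx A \in unitmx) = (A \in unitmx).
Proof. by rewrite /ctmx unitmx_tr map_unitmx. Qed.

Lemma ctmx_diag_real p (s : 'rV[C]_p) :
  (forall i, s 0 i \is Num.real) -> ctmx (diag_mx s) = diag_mx s.
Proof.
move=> s_real; apply/matrixP => i j; rewrite !mxE.
by case: (eqVneq i j) => [->|_]; rewrite ?mulr1n ?mulr0n ?conjC0 //; apply/CrealP.
Qed.

Lemma ctmx_mulmx_hermitian p q (A : 'M[C]_(p, q)) : ctmx (ctmx A *m A) = ctmx A *m A.
Proof. by rewrite ctmxM ctmxK. Qed.

Lemma char_poly_unitary_conj p (U A : 'M[C]_p) :
  U *m ctmx U = 1%:M -> char_poly (ctmx U *m A *m U) = char_poly A.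
Proof. by move=> hU; rewrite -mulmxA char_poly_mulmxC_square -mulmxA hU mulmx1. Qed.

Lemma mxrank_unitary_conj p (U A : 'M[C]_p) :
  U *m ctmx U = 1%:M -> \rank (ctmx U *m A *m U) = \rank A.
Proof.
move=> hU; apply/eqP; rewrite eqn_leq (leq_trans (mxrankM_maxl _ _)) ?mxrankM_maxr //=.
have {1}-> : A = U *m (ctmx U *m A *m U) *m ctmx U.
  by rewrite !mulmxA hU mul1mx -mulmxA hU mulmx1.
by rewrite (leq_trans (mxrankM_maxl _ _)) ?mxrankM_maxr.
Qed.

End ConjugateTranspose.

Section Spectral.
Variable C : numClosedFieldType.
Implicit Types p q : nat.

Lemma char_poly_diag_mx p (s : 'rV[C]_p) :
  char_poly (diag_mx s) = \prod_(i < p) ('X - (s 0 i)%:P).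
Proof.
rewrite char_poly_trig ?diag_mx_is_trig //.
by apply: eq_bigr => i _; rewrite mxE eqxx mulr1n.
Qed.

Lemma hermitian_spectral p (H : 'M[C]_p) : ctmx H = H ->
  exists U : 'M_p, exists s : 'rV_p,
    [/\ U *m ctmx U = 1%:M, forall i, s 0 i \is Num.real & H = ctmx U *m diag_mx s *m U].
Proof.
move=> hH; have H_normal : H \is normalmx by apply/normalmxP; rewrite -ctmxE hH.
have eH := orthomx_spectralP H_normal.
rewrite invmx_unitary ?spectral_unitarymx // -ctmxE in eH.
set U := spectralmx H in eH; set s := spectral_diag H in eH.
have hU : U *m ctmx U = 1%:M by rewrite ctmxE; apply/unitarymxP/spectral_unitarymx.
exists U, s; split => // i.
have eD : diag_mx s = U *m H *m ctmx U.
  by rewrite eH !mulmxA hU mul1mx -mulmxA hU mulmx1.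
have /matrixP/(_ i i) : ctmx (diag_mx s) = diag_mx s.
  by rewrite eD !ctmxM ctmxK hH mulmxA.
by rewrite !mxE eqxx !mulr1n => /CrealP.
Qed.

Lemma diag_mx_unitarily_similar p (s1 s2 : 'rV[C]_p) :
  \prod_(i < p) ('X - (s1 0 i)%:P) = \prod_(i < p) ('X - (s2 0 i)%:P) ->
  exists Q : 'M[C]_p, Q *m ctmx Q = 1%:M /\ diag_mx s1 = Q *m diag_mx s2 *m ctmx Q.
Proof.
move=> e; pose t1 := [tuple s1 0 i | i < p]; pose t2 := [tuple s2 0 i | i < p].
have /tuple_permP[sg t1_sg] : perm_eq t1 t2.
  apply: prod_XsubC_eq; rewrite !big_tuple.
  by under eq_bigr do rewrite tnth_mktuple; under [RHS]eq_bigr do rewrite tnth_mktuple.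
have s1_sg i : s1 0 i = s2 0 (sg i).
  by have := congr1 (fun t => tnth t i) (val_inj t1_sg); rewrite /= !tnth_mktuple.
have ctmx_perm : ctmx (perm_mx sg : 'M[C]_p) = perm_mx sg^-1.
  by rewrite /ctmx (map_perm_mx conjC) tr_perm_mx.
exists (perm_mx sg); rewrite ctmx_perm -perm_mxM mulgV perm_mx1; split=> //.
rewrite -row_permE -col_permE; apply/matrixP => i j.
by rewrite !mxE s1_sg (inj_eq perm_inj).
Qed.

Lemma hermitian_unitarily_similar p (H1 H2 : 'M[C]_p) :
  ctmx H1 = H1 -> ctmx H2 = H2 -> char_poly H1 = char_poly H2 ->
  exists Y : 'M[C]_p, Y *m ctmx Y = 1%:M /\ H1 = ctmx Y *m H2 *m Y.
Proof.
move=> H1_herm H2_herm.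
have [U1 [s1 [hU1 _ eH1]]] := hermitian_spectral H1_herm.
have [U2 [s2 [hU2 _ eH2]]] := hermitian_spectral H2_herm.
rewrite {1}eH1 {1}eH2 !char_poly_unitary_conj // !char_poly_diag_mx.
move=> /diag_mx_unitarily_similar[Q [hQ eQ]].
have hU2' := mulmx1C hU2; have hQ' := mulmx1C hQ.
exists (ctmx U2 *m ctmx Q *m U1); split.
  rewrite !ctmxM !ctmxK !mulmxA -[_ *m U1 *m _]mulmxA hU1 mulmx1.
  by rewrite -[_ *m Q]mulmxA hQ' mulmx1 hU2'.
have eD2 : diag_mx s2 = U2 *m H2 *m ctmx U2.
  by rewrite eH2 !mulmxA hU2 mul1mx -mulmxA hU2 mulmx1.
by rewrite eH1 eQ eD2 !ctmxM !ctmxK !mulmxA.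
Qed.

Lemma hermitian_eigvec_exists p (H : 'M[C]_p) : ctmx H = H -> exists l, is_eigvec H l.
Proof.
move=> /hermitian_spectral[U [s [hU s_real eH]]].
have chiH : char_poly H = \prod_(i < p) ('X - (s 0 i)%:P).
  by rewrite eH char_poly_unitary_conj // char_poly_diag_mx.
pose l0 := [seq s 0 i | i <- enum 'I_p].
have l0_real : all (fun x => x \is Num.real) l0 by apply/allP => x /mapP[i _ ->].
exists (sort >=%R l0); split.
- by rewrite size_sort size_map size_enum_ord.
- by rewrite all_sort.
- apply: (sort_sorted_in (P := fun x => x \is Num.real)) => // x y hx hy.
  by rewrite orbC real_leVge.
- by rewrite chiH (perm_big _ (permEl (perm_sort _ _))) big_map big_enum.
Qed.

Lemma char_poly_gram_root_ge0 p q (M : 'M[C]_(p, q)) x :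
  root (char_poly (ctmx M *m M)) x -> 0 <= x.
Proof.
rewrite -eigenvalue_root_char => /eigenvalueP[v hv v_neq0].
have dot_Mv : dotmx (v *m ctmx M) (v *m ctmx M) = x * dotmx v v.
  rewrite !dotmxE -!ctmxE ctmxM ctmxK !mulmxA -(mulmxA v) hv.
  by rewrite -scalemxAl mxE.
have : 0 <= x * dotmx v v by rewrite -dot_Mv dnorm_ge0.
by rewrite pmulr_lge0 // dotmx_is_dotmx.
Qed.

Lemma MPinv_uniq p q (A : 'M[C]_(p, q)) (X Y : 'M[C]_(q, p)) :
  is_MPinv A X -> is_MPinv A Y -> X = Y.
Proof.
move=> [AXA XAX AX_herm XA_herm] [AYA YAY AY_herm YA_herm].
have -> : X = X *m A *m Y.
  have -> : X *m A *m Y = X *m (A *m X *m (A *m Y)) by rewrite !mulmxA XAX.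
  by rewrite -AX_herm -AY_herm -ctmxM !mulmxA AYA AX_herm mulmxA XAX.
have -> : X *m A *m Y = X *m A *m (Y *m A) *m Y by rewrite -(mulmxA (X *m A)) YAY.
rewrite -XA_herm -YA_herm -ctmxM.
by rewrite mulmxA -(mulmxA Y A X) -mulmxA AXA YA_herm YAY.
Qed.

End Spectral.

Lemma char_poly_idempotent (F : fieldType) p (Q : 'M[F]_p) : Q *m Q = Q ->
  'X^(\rank Q) * char_poly Q = 'X^p * ('X - 1) ^+ (\rank Q).
Proof.
move=> Q_idem; set L := col_base Q; set U := row_base Q.
have eQ : Q = L *m U by rewrite mulmx_base.
have [Z ZL] : exists Z, Z *m L = 1%:M by apply/row_fullP/col_base_full.
have [B UB] : exists B, U *m B = 1%:M by apply/row_freeP/row_base_free.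
clearbody L U.
have UL : U *m L = 1%:M.
  have LU_idem : L *m U *m (L *m U) = L *m U by rewrite -eQ.
  have := congr1 (fun M => Z *m M *m B) LU_idem.
  by rewrite !mulmxA ZL mul1mx -!mulmxA UB mulmx1 => <-.
rewrite {2}eQ char_poly_mulmxC UL char_poly_trig ?scalar_mx_is_trig //.
by under eq_bigr do rewrite mxE eqxx mulr1n; rewrite prodr_const card_ord.
Qed.

Lemma sorted_cat_nseq0 (R : numDomainType) (l : seq R) k :
  sorted >=%R l -> all (fun x => 0 <= x) l -> sorted >=%R (l ++ nseq k 0).
Proof.
have ge_trans : transitive (>=%R : rel R) by move=> y x z /= xy yz; apply: le_trans yz xy.
rewrite !(sorted_pairwise ge_trans) pairwise_cat => -> l_ge0; apply/and3P; split=> //.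
  by apply/allrelP => x y /(allP l_ge0) ? /nseqP[-> _].
by elim: k => //= k ->; rewrite andbT; apply/allP => x /nseqP[-> _] /=.
Qed.

Lemma prod_XsubC_pad0 (R : comNzRingType) (l : seq R) k :
  \prod_(x <- l ++ nseq k 0) ('X - x%:P) = \prod_(x <- l) ('X - x%:P) * 'X^k.
Proof. by rewrite big_cat big_nseq subr0 iter_mulr_1. Qed.

Lemma is_eigvec_pad0 (C : numClosedFieldType) p n (A : 'M[C]_p) (N : 'M[C]_n) l :
  (p <= n)%N -> all (fun x => 0 <= x) l -> is_eigvec A l ->
  'X^p * char_poly N = 'X^n * char_poly A -> is_eigvec N (l ++ nseq (n - p) 0).
Proof.
move=> le_pn l_ge0 [size_l l_real l_sorted chiA] chiN; split.
- by rewrite size_cat size_nseq size_l subnKC.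
- by rewrite all_cat l_real; apply/allP => x /nseqP[-> _]; rewrite real0.
- exact: sorted_cat_nseq0.
- apply: (@mulfI _ 'X^p); first by rewrite expf_neq0 // polyX_eq0.
  by rewrite chiN chiA prod_XsubC_pad0 mulrCA -exprD subnKC // mulrC.
Qed.

Lemma gram_factor (C : numClosedFieldType) n d (T : 'M[C]_(n, d)) : (d <= n)%N ->
  exists A : 'M[C]_d, ctmx T *m T = A *m ctmx A.
Proof.
move=> le_dn; pose J := schmidt (ctmx T); pose A := ctmx T *m ctmx J.
have JJ : J *m ctmx J = 1%:M by rewrite ctmxE; apply/unitarymxP/schmidt_unitarymx.
have TJ : ctmx T = A *m J.
  have eT := mulmxKpV (schmidt_sub (ctmx T)); rewrite -/J in eT.
  by rewrite /A -{2}eT -(mulmxA _ J) JJ mulmx1 eT.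
by exists A; rewrite -{2}[T]ctmxK TJ ctmxM mulmxA -(mulmxA A) JJ mulmx1.
Qed.

Lemma unitmx_char_poly_gt0 (F : numFieldType) p (A : 'M[F]_p) (s : seq F) :
  all (fun x => 0 < x) s -> char_poly A = \prod_(x <- s) ('X - x%:P) -> A \in unitmx.
Proof.
move=> s_gt0 chiA; rewrite unitmxE unitfE; apply/negP => /eqP detA0.
have : root (char_poly A) 0 by rewrite /root horner_coef0 char_poly_det detA0 mulr0.
by rewrite chiA root_prod_XsubC => /(allP s_gt0); rewrite ltxx.
Qed.

HB.lock Definition range_projmx (C : numClosedFieldType) n d (T : 'M[C]_(n, d)) : 'M[C]_n :=
  T *m invmx (ctmx T *m T) *m ctmx T.

Section AnalysisOperator.
Variables (C : numClosedFieldType) (n d : nat) (T : 'M[C]_(n, d)).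
Hypothesis T_RS : ctmx T *m T \in unitmx.

Local Notation S := (ctmx T *m T).
Local Notation Si := (invmx (ctmx T *m T)).
Local Notation PT := (range_projmx T).

Lemma invS_herm : ctmx Si = Si.
Proof. by rewrite ctmx_inv ctmx_mulmx_hermitian. Qed.

Lemma range_projmxT : PT *m T = T.
Proof. by rewrite range_projmx.unlock -!mulmxA mulVmx // mulmx1. Qed.

Lemma ctmx_range_projmx : ctmx T *m PT = ctmx T.
Proof. by rewrite range_projmx.unlock !mulmxA mulmxV // mul1mx. Qed.

Lemma range_projmx_idem : PT *m PT = PT.
Proof. by rewrite {1}range_projmx.unlock -mulmxA ctmx_range_projmx range_projmx.unlock. Qed.

Lemma range_projmx_herm : ctmx PT = PT.
Proof. by rewrite range_projmx.unlock !ctmxM ctmxK invS_herm mulmxA. Qed.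

Lemma mxrank_analysis : \rank T = d.
Proof.
apply/eqP; rewrite eqn_leq rank_leq_col /=.
by rewrite -{1}(mxrank_unit T_RS) mxrankM_maxr.
Qed.

Lemma leq_dim_analysis : (d <= n)%N.
Proof. by rewrite -mxrank_analysis rank_leq_row. Qed.

Lemma mxrank_range_projmx : \rank PT = d.
Proof.
apply/eqP; rewrite eqn_leq; apply/andP; split.
  by rewrite range_projmx.unlock -mulmxA (leq_trans (mxrankM_maxl _ _)) // mxrank_analysis.
by rewrite -[X in (X <= _)%N]mxrank_analysis -{1}range_projmxT mxrankM_maxl.
Qed.

Lemma eigvec_invS_ge0 l : is_eigvec Si l -> all (fun x => 0 <= x) l.
Proof.
move=> [_ _ _ chiSi]; apply/allP => x x_l.
have invS_gram : ctmx (T *m Si) *m (T *m Si) = Si.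
  by rewrite ctmxM invS_herm -mulmxA (mulmxA (ctmx T)) mulmxV // mulmx1.
by apply: (@char_poly_gram_root_ge0 _ _ _ (T *m Si)); rewrite invS_gram chiSi root_prod_XsubC.
Qed.

Lemma gram_MPinv : is_MPinv (T *m ctmx T) (T *m (Si *m Si *m ctmx T)).
Proof.
have GX : T *m ctmx T *m (T *m (Si *m Si *m ctmx T)) = PT.
  rewrite range_projmx.unlock !mulmxA -(mulmxA T (ctmx T) T) -(mulmxA T S Si).
  by rewrite mulmxV // mulmx1.
have XG : T *m (Si *m Si *m ctmx T) *m (T *m ctmx T) = PT.
  rewrite range_projmx.unlock !mulmxA -(mulmxA (T *m Si *m Si) (ctmx T) T).
  by rewrite -(mulmxA (T *m Si) Si S) mulVmx // mulmx1.
by split; rewrite ?GX ?XG ?range_projmx_herm // mulmxA range_projmxT.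
Qed.

Lemma char_poly_gram_MPinv :
  'X^d * char_poly (T *m (Si *m Si *m ctmx T)) = 'X^n * char_poly Si.
Proof. by rewrite char_poly_mulmxC -!mulmxA mulVmx // mulmx1. Qed.

Lemma invS_factor : exists2 Cm : 'M[C]_d, Cm \in unitmx & Si = Cm *m ctmx Cm.
Proof.
have [A SA] := gram_factor T leq_dim_analysis.
have A_unit : A \in unitmx by move: T_RS; rewrite SA unitmx_mul => /andP[].
have cA_unit : ctmx A \in unitmx by rewrite ctmx_unit.
exists (invmx (ctmx A)); first by rewrite unitmx_inv.
have CmS : invmx (ctmx A) *m ctmx (invmx (ctmx A)) *m S = 1%:M.
  by rewrite ctmx_inv ctmxK SA mulmxA mulmxKV // mulVmx.
by rewrite -[RHS]mulmx1 -(mulmxV T_RS) mulmxA CmS mul1mx.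
Qed.

Lemma invS_congruence (K : 'M[C]_d) : ctmx K = K ->
  char_poly (Si *m K) = char_poly Si ->
  exists G : 'M[C]_d, ctmx G *m K *m G = 1%:M /\ G *m Si *m ctmx G = Si.
Proof.
move=> K_herm chi_SiK; have [Cm Cm_unit eSi] := invS_factor.
have H1_herm : ctmx (ctmx Cm *m K *m Cm) = ctmx Cm *m K *m Cm.
  by rewrite !ctmxM ctmxK K_herm mulmxA.
have chiH : char_poly (ctmx Cm *m K *m Cm) = char_poly (ctmx Cm *m Cm).
  rewrite -mulmxA char_poly_mulmxC_square -mulmxA -eSi char_poly_mulmxC_square.
  by rewrite chi_SiK eSi char_poly_mulmxC_square.
have [Z [hZ eZ]] := hermitian_unitarily_similar H1_herm (ctmx_mulmx_hermitian Cm) chiH.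
have hZ' := mulmx1C hZ; set Cmi := invmx Cm.
have CmCmi : Cm *m Cmi = 1%:M by apply: mulmxV.
have CmiCm : Cmi *m Cm = 1%:M by apply: mulVmx.
have cCmCmi : ctmx Cmi *m ctmx Cm = 1%:M by rewrite -ctmxM CmCmi ctmx1.
have cCmiCm : ctmx Cm *m ctmx Cmi = 1%:M by rewrite -ctmxM CmiCm ctmx1.
exists (Cm *m ctmx Z *m Cmi); rewrite !ctmxM ctmxK; split.
  have -> : ctmx Cmi *m (Z *m ctmx Cm) *m K *m (Cm *m ctmx Z *m Cmi)
      = ctmx Cmi *m Z *m (ctmx Cm *m K *m Cm) *m ctmx Z *m Cmi by rewrite !mulmxA.
  rewrite eZ; have -> : ctmx Cmi *m Z *m (ctmx Z *m (ctmx Cm *m Cm) *m Z) *m ctmx Z *m Cmi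
      = ctmx Cmi *m (Z *m ctmx Z) *m ctmx Cm *m Cm *m (Z *m ctmx Z) *m Cmi by rewrite !mulmxA.
  by rewrite hZ !mulmx1 cCmCmi mul1mx CmCmi.
have -> : Cm *m ctmx Z *m Cmi *m Si *m (ctmx Cmi *m (Z *m ctmx Cm))
    = Cm *m ctmx Z *m (Cmi *m Cm) *m (ctmx Cm *m ctmx Cmi) *m Z *m ctmx Cm.
  by rewrite eSi !mulmxA.
by rewrite CmiCm cCmiCm !mulmx1 -(mulmxA Cm) hZ' mulmx1 eSi.
Qed.

Lemma range_unitary_extension (G : 'M[C]_d) : G *m Si *m ctmx G = Si ->
  exists V : 'M[C]_n, V *m ctmx V = 1%:M /\ V *m T = T *m G.
Proof.
move=> G_Si; pose Q := 1%:M - PT.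
have Q_idem : Q *m Q = Q by rewrite mulmxBl mul1mx mulmxBr mulmx1 range_projmx_idem subrr subr0.
have TQ : ctmx T *m Q = 0 by rewrite mulmxBr mulmx1 ctmx_range_projmx subrr.
have QT : Q *m T = 0 by rewrite mulmxBl mul1mx range_projmxT subrr.
have Q_herm : ctmx Q = Q by rewrite ctmxB ctmx1 range_projmx_herm.
have PTQ : PT + Q = 1%:M by rewrite addrC subrK.
clearbody Q.
exists (T *m G *m Si *m ctmx T + Q); split.
  rewrite ctmxD Q_herm !ctmxM ctmxK invS_herm.
  rewrite mulmxDl !mulmxDr Q_idem -(mulmxA _ (ctmx T) Q) TQ mulmx0 !mulmxA QT !mul0mx.
  rewrite addr0 add0r -(mulmxA _ (ctmx T) T) -(mulmxA (T *m G) Si) mulVmx // mulmx1.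
  rewrite -(mulmxA T G) -(mulmxA T (G *m Si)) G_Si.
  by rewrite -PTQ range_projmx.unlock.
by rewrite mulmxDl QT addr0 -!mulmxA mulVmx // mulmx1.
Qed.

Lemma gram_MPinv_eigvec l (X : 'M[C]_n) : is_eigvec Si l ->
  is_MPinv (T *m ctmx T) X -> is_eigvec X (l ++ nseq (n - d) 0).
Proof.
move=> Si_l /MPinv_uniq/(_ gram_MPinv) ->.
exact: is_eigvec_pad0 leq_dim_analysis (eigvec_invS_ge0 Si_l) Si_l char_poly_gram_MPinv.
Qed.

Variable mu : seq C.
Hypotheses (size_mu : size mu = d) (mu_gt0 : all (fun x => 0 < x) mu).

Lemma nth_mu_ge0 j : 0 <= nth 0 mu j.
Proof.
case: (ltnP j (size mu)) => [lt_j|le_j]; last by rewrite nth_default.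
by apply/ltW/(allP mu_gt0)/mem_nth.
Qed.

Lemma Dn_herm : ctmx (Dn n mu) = Dn n mu.
Proof. by apply: ctmx_diag_real => i; rewrite mxE ger0_real ?nth_mu_ge0. Qed.

Lemma char_poly_Dn : 'X^d * char_poly (Dn n mu) = 'X^n * \prod_(x <- mu) ('X - x%:P).
Proof.
have le_dn := leq_dim_analysis.
rewrite char_poly_diag_mx.
have -> : \prod_(i < n) ('X - ((\row_j nth 0 mu j) 0 i)%:P)
        = \prod_(x <- mu ++ nseq (n - d) 0) ('X - x%:P).
  rewrite (big_nth 0) size_cat size_nseq size_mu subnKC // big_mkord.
  apply: eq_bigr => i _; rewrite mxE nth_cat size_mu; case: ltnP => // le_di.
  by rewrite nth_nseq nth_default ?size_mu //; case: ifP.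
by rewrite prod_XsubC_pad0 mulrCA -exprD subnKC // mulrC.
Qed.

Lemma dual_to_projection (R : 'M[C]_(n, d)) : ctmx R *m T = 1%:M ->
  char_poly (ctmx R *m R) = \prod_(x <- mu) ('X - x%:P) ->
  exists2 P : 'M[C]_n, is_orth_proj_rank P d &
    forall l, is_eigvec Si l -> is_eigvec (P *m Dn n mu *m P) (l ++ nseq (n - d) 0).
Proof.
move=> RT chiR; have TR : ctmx T *m R = 1%:M by rewrite -[R]ctmxK -ctmxM RT ctmx1.
have RR_herm : ctmx (R *m ctmx R) = R *m ctmx R by rewrite ctmxM ctmxK.
have chiRR : char_poly (Dn n mu) = char_poly (R *m ctmx R).
  apply: (@mulfI _ 'X^d); first by rewrite expf_neq0 // polyX_eq0.
  by rewrite char_poly_Dn char_poly_mulmxC chiR.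
have [Y [hY eY]] := hermitian_unitarily_similar Dn_herm RR_herm chiRR.
exists (ctmx Y *m PT *m Y).
  split; last by rewrite mxrank_unitary_conj // mxrank_range_projmx.
    by rewrite !mulmxA -(mulmxA _ Y) hY mulmx1 -(mulmxA _ PT PT) range_projmx_idem.
  by rewrite !ctmxM ctmxK range_projmx_herm mulmxA.
move=> l Si_l; apply: is_eigvec_pad0 leq_dim_analysis (eigvec_invS_ge0 Si_l) Si_l _.
have PTR : PT *m R = T *m Si by rewrite range_projmx.unlock -mulmxA TR mulmx1.
have -> : ctmx Y *m PT *m Y *m Dn n mu *m (ctmx Y *m PT *m Y)
        = ctmx Y *m (PT *m (Y *m Dn n mu *m ctmx Y) *m PT) *m Y by rewrite !mulmxA.
have RRY : Y *m Dn n mu *m ctmx Y = R *m ctmx R.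
  by rewrite eY !mulmxA hY mul1mx -mulmxA hY mulmx1.
rewrite char_poly_unitary_conj // RRY mulmxA PTR -mulmxA -range_projmx_herm -ctmxM PTR.
by rewrite ctmxM invS_herm !mulmxA -char_poly_gram_MPinv !mulmxA.
Qed.

Lemma dual_of_unitary (Y : 'M[C]_n) : Y *m ctmx Y = 1%:M ->
  ctmx T *m (ctmx Y *m Dn n mu *m Y) *m T = 1%:M ->
  exists2 R : 'M[C]_(n, d), ctmx R *m T = 1%:M &
    char_poly (ctmx R *m R) = \prod_(x <- mu) ('X - x%:P).
Proof.
move=> hY THT; pose E : 'M[C]_(n, d) := pid_mx d.
pose Dsq : 'M[C]_n := diag_mx (\row_j sqrtC (nth 0 mu j)).
have Dsq_herm : ctmx Dsq = Dsq.
  by apply: ctmx_diag_real => j; rewrite mxE sqrtC_real ?nth_mu_ge0.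
have EE : E *m ctmx E = pid_mx d.
  by rewrite /ctmx (map_pid_mx conjC) tr_pid_mx pid_mx_id.
have DsqEEDsq : Dsq *m (E *m ctmx E) *m Dsq = Dn n mu.
  rewrite EE mul_diag_mx mul_mx_diag; apply/matrixP => i j; rewrite !mxE.
  case: (eqVneq i j) => [<-|/negbTE ij]; last by rewrite val_eqE ij mulr0 mul0r.
  rewrite eqxx /= mulr1n; case: ltnP => [_|le_di].
    by rewrite mulr1 -expr2 sqrtCK.
  by rewrite mulr0 mul0r nth_default // size_mu.
(* B is a square root of ctmx Y *m Dn n mu *m Y, and R := B *m (ctmx B *m T):
   ctmx R *m R is unitarily similar to ctmx B *m B, whose spectrum is mu. *)
pose B := ctmx Y *m Dsq *m E.
have BB : B *m ctmx B = ctmx Y *m Dn n mu *m Y.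
  by rewrite /B !ctmxM ctmxK Dsq_herm -DsqEEDsq !mulmxA.
pose U := ctmx B *m T.
have hU : U *m ctmx U = 1%:M.
  by apply: mulmx1C; rewrite /U ctmxM ctmxK mulmxA -(mulmxA (ctmx T)) BB.
exists (B *m U); first by rewrite ctmxM -mulmxA (mulmx1C hU).
have -> : ctmx (B *m U) *m (B *m U) = ctmx U *m (ctmx B *m B) *m U by rewrite ctmxM !mulmxA.
rewrite char_poly_unitary_conj //; apply: (@mulfI _ 'X^n).
  by rewrite expf_neq0 // polyX_eq0.
rewrite char_poly_mulmxC BB char_poly_unitary_conj //.
by rewrite char_poly_Dn.
Qed.

Lemma projection_to_dual (P : 'M[C]_n) : is_orth_proj_rank P d ->
  (forall l, is_eigvec Si l -> is_eigvec (P *m Dn n mu *m P) (l ++ nseq (n - d) 0)) ->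
  exists2 R : 'M[C]_(n, d), ctmx R *m T = 1%:M &
    char_poly (ctmx R *m R) = \prod_(x <- mu) ('X - x%:P).
Proof.
move=> [P_idem P_herm rankP] P_eigvec.
have [l Si_l] := hermitian_eigvec_exists invS_herm.
have [_ _ _ chiPDP] := P_eigvec l Si_l; have [_ _ _ chiSi] := Si_l.
have Xd_neq0 : ('X^d : {poly C}) != 0 by rewrite expf_neq0 // polyX_eq0.
have Xn_neq0 : ('X^n : {poly C}) != 0 by rewrite expf_neq0 // polyX_eq0.
have chi_PT : char_poly PT = char_poly P.
  apply: (mulfI Xd_neq0).
  have := char_poly_idempotent range_projmx_idem; rewrite mxrank_range_projmx => ->.
  by have := char_poly_idempotent P_idem; rewrite rankP => ->.
have [Y [hY eY]] := hermitian_unitarily_similar range_projmx_herm P_herm chi_PT.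
have [H eH] : exists H, H = ctmx Y *m Dn n mu *m Y by eexists.
have H_herm : ctmx H = H by rewrite eH !ctmxM ctmxK Dn_herm mulmxA.
have PTHPT : PT *m H *m PT = ctmx Y *m (P *m Dn n mu *m P) *m Y.
  rewrite eY eH; have -> : ctmx Y *m P *m Y *m (ctmx Y *m Dn n mu *m Y) *m (ctmx Y *m P *m Y)
      = ctmx Y *m P *m (Y *m ctmx Y) *m Dn n mu *m (Y *m ctmx Y) *m P *m Y.
    by rewrite !mulmxA.
  by rewrite hY !mulmx1 !mulmxA.
have K_herm : ctmx (ctmx T *m H *m T) = ctmx T *m H *m T.
  by rewrite !ctmxM ctmxK H_herm mulmxA.
have chi_SiK : char_poly (Si *m (ctmx T *m H *m T)) = char_poly Si.
  have -> : Si *m (ctmx T *m H *m T) = Si *m ctmx T *m H *m PT *m T.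
    by rewrite -(mulmxA _ PT T) range_projmxT !mulmxA.
  apply: (mulfI Xn_neq0); rewrite char_poly_mulmxC.
  have -> : T *m (Si *m ctmx T *m H *m PT) = PT *m H *m PT.
    by rewrite range_projmx.unlock !mulmxA.
  rewrite PTHPT char_poly_unitary_conj //.
  by rewrite chiPDP chiSi prod_XsubC_pad0 mulrCA -exprD subnKC ?leq_dim_analysis // mulrC.
have [G [GKG GSG]] := invS_congruence K_herm chi_SiK.
have [V [hV VT]] := range_unitary_extension GSG.
apply: (@dual_of_unitary (Y *m V)).
  by rewrite ctmxM !mulmxA -(mulmxA Y) hV mulmx1 hY.
have -> : ctmx T *m (ctmx (Y *m V) *m Dn n mu *m (Y *m V)) *m T
    = ctmx (V *m T) *m H *m (V *m T) by rewrite eH !ctmxM !mulmxA.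
by rewrite VT ctmxM -GKG !mulmxA.
Qed.

End AnalysisOperator.

Theorem theorem5p2 (C : numClosedFieldType) (m : nat) (k : 'I_m -> nat) (d : nat)
    (hm : (0 < m)%N) (hd : (0 < d)%N)
    (V : system C k d) (hV : is_RS V)
    (mu : seq C) (hmu_size : size mu = d) (hmu_sorted : sorted (>=%R) mu)
    (hmu_pos : all (fun x => 0 < x) mu) :
  (exists W : system C k d, is_dual V W /\ is_eigvec (rsop W) mu)
  <->
  (exists P : 'M[C]_(\sum_i k i),
      is_orth_proj_rank P d /\
      forall l : seq C, is_eigvec (invmx (rsop V)) l ->
        is_eigvec (P *m Dn (\sum_i k i) mu *m P) (l ++ nseq ((\sum_i k i) - d) 0)
        /\ forall X : 'M[C]_(\sum_i k i), is_MPinv (gram V) X ->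
             is_eigvec X (l ++ nseq ((\sum_i k i) - d) 0)).
Proof.
split.
  move=> [W [[_ W_dual] [_ _ _ chiW]]].
  have [P P_proj P_eigvec] := dual_to_projection hV hmu_size hmu_pos W_dual chiW.
  exists P; split=> // l Si_l; split; first exact: P_eigvec.
  by move=> X; apply: gram_MPinv_eigvec.
move=> [P [P_proj P_eigvec]].
have [R RT chiR] := projection_to_dual hV hmu_size hmu_pos P_proj
  (fun l Si_l => (P_eigvec l Si_l).1).
have TW : anaop (fun i => submxcol R i : 'M_(k i, d)) = R by apply: submxcolK.
exists (fun i => submxcol R i); rewrite /is_dual /is_eigvec /is_RS /rsop TW.
split; first by split=> //; apply: unitmx_char_poly_gt0 chiR.
split=> //; apply/allP => x /(allP hmu_pos); exact: gtr0_real.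
Qed.
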